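(* Let $\{\mathcal S,\mathcal C,\mathcal R\}$ be a reaction network with $d$ species and reactions $\nu_k\to\nu_k'$, $k=1,\dots,m$, and let $\kappa_k>0$ be rate constants. Suppose the deterministic mass-action system $$\dot x=\sum_{k}\kappa_k x^{\nu_k}(\nu_k'-\nu_k)$$ is complex balanced, i.e. it admits a complex balanced equilibrium in $\mathbb{R}^d_{>0}$. For $V>0$ put $\kappa_k^V=\kappa_k/V^{|\nu_k|-1}$. Let $V\to\infty$ along an increasing sequence. Let $\tilde x^V\in\frac1V\mathbb{Z}^d_{\ge0}$ be points with $\lim_{V\to\infty}\tilde x^V=\tilde x\in\mathbb{R}^d_{>0}$. Let $c\in\mathbb{R}^d_{>0}$ be the unique complex balanced equilibrium in the positive stoichiometric compatibility class $(\tilde x+S)\cap\mathbb{R}^d_{>0}$. Define $$\mathcal V(x)=\sum_{i=1}^d\big[x_i(\ln x_i-\ln c_i-1)+c_i\big],\qquad x\in\mathbb{R}^d_{>0}.$$ (a) Let $$\pi^V(x)=\prod_{i=1}^d\frac{(Vc_i)^{x_i}}{x_i!}e^{-Vc_i},\qquad x\in\mathbb{Z}^d_{\ge0},$$ and let $\tilde\pi^V(\tilde w)=\pi^V(V\tilde w)$ for $\tilde w\in\frac1V\mathbb{Z}^d_{\ge0}$. Then $$\lim_{V\to\infty}\Big[-\tfrac1V\ln\tilde\pi^V(\tilde x^V)\Big]=\mathcal V(\tilde x).$$ (b) For each $V$, let $\Gamma^V\subset\mathbb{Z}^d_{\ge0}$ be an irreducible closed component of the state space of the stochastic mass-action Markov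 chain with rate constants $\kappa_k^V$, chosen so that $V\tilde x^V\in\Gamma^V$. Let $$\pi^V_{\Gamma^V}(x)=\frac{1}{Z^V_{\Gamma^V}}\prod_{i=1}^d\frac{(Vc_i)^{x_i}}{x_i!}e^{-Vc_i}\quad (x\in\Gamma^V),$$ where $Z^V_{\Gamma^V}>0$ is the normalizing constant making this a probability distribution on $\Gamma^V$. Define $\tilde\pi^V_{\Gamma^V}(\tilde w)=\pi^V_{\Gamma^V}(V\tilde w)$ for $\tilde w\in\frac1V\Gamma^V$. Then $$\lim_{V\to\infty}\tfrac1V\ln Z^V_{\Gamma^V}=0 \qquad\text{and}\qquad \lim_{V\to\infty}\Big[-\tfrac1V\ln\tilde\pi^V_{\Gamma^V}(\tilde x^V)\Big]=\mathcal V(\tilde x).$$ (c) $\mathcal V$ is a Lyapunov function at $c$ on the positive stoichiometric compatibility class $E=(c+S)\cap\mathbb{R}^d_{>0}$, where $f(x)=\sum_k\kappa_kx^{\nu_k}(\nu_k'-\nu_k)$. Precisely: - $\mathcal V(c)=0$; - $\mathcal V(x)>0$ for all $x\in E$ with $x\neq c$; - $\nabla\mathcal V(x)\cdot f(x)\le0$ for all $x\in E$, with equality if and only if $x=c$.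
   Context: Notation: for $u,v\in\mathbb{R}^d_{\ge0}$, $u^v=\prod_iu_i^{v_i}$ with $0^0=1$, and $|\nu_k|=\sum_i\nu_{ki}$. A reaction network consists of species $S_1,\dots,S_d$ and reactions $\nu_k\to\nu_k'$ with $\nu_k,\nu_k'\in\mathbb{Z}^d_{\ge0}$ (the complexes). The stoichiometric subspace is $S=\mathrm{span}\{\nu_k'-\nu_k\}$, and a positive stoichiometric compatibility class is a set $(y+S)\cap\mathbb{R}^d_{>0}$. An equilibrium $c$ of the deterministic mass-action system is complex balanced if for every complex $z$, $$\sum_{k:\nu_k'=z}\kappa_kc^{\nu_k}=\sum_{k:\nu_k=z}\kappa_kc^{\nu_k}.$$ It is known (Horn–Jackson) that if one positive complex balanced equilibrium exists, then each positive stoichiometric compatibility class contains exactly one positive equilibrium, and it is complex balanced. The stochastic mass-action model with rate constants $\kappa^V_k$ is the continuous-time Markov chain on $\mathbb{Z}^d_{\ge0}$ that jumps from $x$ to $x+\nu_k'-\nu_k$ with intensity $$\lambda_k^V(x)=\kappa_k^V\prod_{i}\frac{x_i!}{(x_i-\nu_{ki})!}\mathbf 1_{\{x_i\ge\nu_{ki}\}}.$$ A closed irreducible component is a subset closed under the chain's transitions in which every state is reachable from every other. *)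

From Stdlib Require Import Reals Lra List Relations Arith Factorial.
Open Scope R_scope.

Fixpoint sumR (n : nat) (f : nat -> R) : R :=
  match n with O => 0 | S n' => sumR n' f + f n' end.
Fixpoint prodR (n : nat) (f : nat -> R) : R :=
  match n with O => 1 | S n' => prodR n' f * f n' end.
Fixpoint sumN (n : nat) (f : nat -> nat) : nat :=
  match n with O => 0%nat | S n' => (sumN n' f + f n')%nat end.

(* Vectors in R^d are functions nat -> R (only indices < d matter);
   complexes / lattice states are functions nat -> nat. *)
Definition vec := nat -> R.
Definition cplx := nat -> nat.

(* x^v = prod_i x_i^{v_i}, with 0^0 = 1 (Stdlib pow: x^0 = 1) *)
Definition monom (d : nat) (x : vec) (v : cplx) : R :=
  prodR d (fun i => x i ^ v i).

Definition cnorm (d : nat) (v : cplx) : nat := sumN d v.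

Definition drift (d m : nat) (nu nu' : nat -> cplx) (kappa : nat -> R)
  (x : vec) : vec :=
  fun i => sumR m (fun k => kappa k * monom d x (nu k)
                              * (INR (nu' k i) - INR (nu k i))).

Definition in_stoich (d m : nat) (nu nu' : nat -> cplx) (y : vec) : Prop :=
  exists a : nat -> R, forall i, (i < d)%nat ->
    y i = sumR m (fun k => a k * (INR (nu' k i) - INR (nu k i))).

Definition pos_vec (d : nat) (x : vec) : Prop :=
  forall i, (i < d)%nat -> 0 < x i.

Fixpoint cplx_eqb (d : nat) (z w : cplx) : bool :=
  match d with
  | O => true
  | S d' => Nat.eqb (z d') (w d') && cplx_eqb d' z w
  end.

Definition complex_balanced (d m : nat) (nu nu' : nat -> cplx)
  (kappa : nat -> R) (c : vec) : Prop :=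
  pos_vec d c /\
  (forall i, (i < d)%nat -> drift d m nu nu' kappa c i = 0) /\
  (forall z : cplx,
     sumR m (fun k => if cplx_eqb d (nu' k) z then kappa k * monom d c (nu k) else 0)
     = sumR m (fun k => if cplx_eqb d (nu k) z then kappa k * monom d c (nu k) else 0)).

Definition lyap (d : nat) (c x : vec) : R :=
  sumR d (fun i => x i * (ln (x i) - ln (c i) - 1) + c i).

Definition poisson (d : nat) (Vol : R) (c : vec) (x : cplx) : R :=
  prodR d (fun i => (Vol * c i) ^ (x i) / INR (fact (x i)) * exp (- (Vol * c i))).

Definition kappaV (d : nat) (kappa : nat -> R) (nu : nat -> cplx) (Vol : R)
  : nat -> R :=
  fun k => kappa k / powerRZ Vol (Z.of_nat (cnorm d (nu k)) - 1)%Z.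

Definition ffact_ind (xi ni : nat) : R :=
  if Nat.leb ni xi then INR (fact xi) / INR (fact (xi - ni)) else 0.

Definition intensity (d : nat) (kV : nat -> R) (nu : nat -> cplx) (k : nat)
  (x : cplx) : R :=
  kV k * prodR d (fun i => ffact_ind (x i) (nu k i)).

(* states of the chain: elements of Z^d_{>=0}, padded with zeros beyond d *)
Definition is_state (d : nat) (x : cplx) : Prop :=
  forall i, (d <= i)%nat -> x i = 0%nat.

Definition jump (d : nat) (nu nu' : nat -> cplx) (k : nat) (x : cplx) : cplx :=
  fun i => if Nat.ltb i d then (x i + nu' k i - nu k i)%nat else 0%nat.

Definition step (d m : nat) (nu nu' : nat -> cplx) (kV : nat -> R)
  (x y : cplx) : Prop :=
  exists k, (k < m)%nat /\ 0 < intensity d kV nu k x /\ y = jump d nu nu' k x.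

Definition closed_irred_component (d m : nat) (nu nu' : nat -> cplx)
  (kV : nat -> R) (G : cplx -> Prop) : Prop :=
  (exists x, G x) /\
  (forall x, G x -> is_state d x) /\
  (forall x y, G x -> step d m nu nu' kV x y -> G y) /\
  (forall x y, G x -> G y -> clos_refl_trans cplx (step d m nu nu' kV) x y).

(* finite partial sums of pi^V over G; the normalizing constant
   Z = sum_{x in G} pi^V(x) is their least upper bound (nonnegative terms) *)
Definition finite_partial_sums (d : nat) (Vol : R) (c : vec) (G : cplx -> Prop)
  : R -> Prop :=
  fun r => exists l : list cplx, NoDup l /\ (forall x, In x l -> G x) /\
    r = fold_right (fun x acc => poisson d Vol c x + acc) 0 l.

Definition normalizer (d : nat) (Vol : R) (c : vec) (G : cplx -> Prop) (Z : R)
  : Prop := is_lub (finite_partial_sums d Vol c G) Z.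

Definition upd (x : vec) (i : nat) (t : R) : vec :=
  fun j => if Nat.eqb j i then t else x j.

From Stdlib Require Import Reals List Relations.
From Stdlib Require Import Lra Lia FunctionalExtensionality Factorial ZArith.
Open Scope R_scope.

(* (a) The logarithm of the Poisson product splits over coordinates, and the
   Stirling-type bounds [n ln n - n <= ln n! <= (n+1) ln (n+1) - n] turn
   [- ln pi^V (V x) / V] into [sum_i x_i (ln x_i - ln c_i - 1) + c_i] up to
   [O(ln V / V)].
   (b) A product of Poisson laws has total mass one, so [Z <= 1].  Conversely
   [Z >= pi^V (Y)] for every state [Y] of the component.  Adding a multiple of the
   equilibrium fluxes [kappa_k c^nu_k] writes [c - x] as a nonnegative combination
   of reaction vectors; firing the reactions at these rates from [V x^V] for about
   [V] rounds keeps the state at distance of order [V] from the boundary (every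
   reaction stays enabled) and ends at some [Y ~ V c], where
   [- ln pi^V (Y) / V -> lyap c c = 0].
   (c) With [g = ln x - ln c], the derivative of the Lyapunov function along the
   drift is [sum_k w_k e^<nu_k,g> (<nu'_k,g> - <nu_k,g>)], which by convexity of
   [exp] is at most [sum_k w_k (e^<nu'_k,g> - e^<nu_k,g>)]; complex balance makes
   the latter sum vanish. *)

Lemma sumR_ext n f g : (forall i, (i < n)%nat -> f i = g i) -> sumR n f = sumR n g.
Proof. induction n; intros H; simpl; auto. rewrite IHn, H; auto. Qed.

Lemma sumR_plus n f g : sumR n (fun i => f i + g i) = sumR n f + sumR n g.
Proof. induction n; simpl; lra. Qed.

Lemma sumR_minus n f g : sumR n (fun i => f i - g i) = sumR n f - sumR n g.
Proof. induction n; simpl; lra. Qed.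

Lemma sumR_scal n a f : sumR n (fun i => a * f i) = a * sumR n f.
Proof. induction n; simpl; [ring|]. rewrite IHn; ring. Qed.

Lemma sumR_eq0 n f : (forall i, (i < n)%nat -> f i = 0) -> sumR n f = 0.
Proof. induction n; intros H; simpl; auto. rewrite IHn, H; auto; lra. Qed.

Lemma sumR_swap n p (f : nat -> nat -> R) :
  sumR n (fun i => sumR p (fun k => f i k)) = sumR p (fun k => sumR n (fun i => f i k)).
Proof.
  induction n; simpl.
  - symmetry; apply sumR_eq0; auto.
  - rewrite IHn, <- sumR_plus; auto.
Qed.

Lemma sumR_le n f g : (forall i, (i < n)%nat -> f i <= g i) -> sumR n f <= sumR n g.
Proof.
  induction n; intros H; simpl; [lra|].
  apply Rplus_le_compat; auto.
Qed.

Lemma sumR_nonneg n f : (forall i, (i < n)%nat -> 0 <= f i) -> 0 <= sumR n f.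
Proof. intros H. rewrite <- (sumR_eq0 n (fun _ => 0)) by auto. apply sumR_le; auto. Qed.

Lemma sumR_ge_term n f k :
  (forall i, (i < n)%nat -> 0 <= f i) -> (k < n)%nat -> f k <= sumR n f.
Proof.
  induction n; intros H Hk; simpl; [lia|].
  destruct (Nat.eq_dec k n) as [->|Hne].
  - pose proof (sumR_nonneg n f ltac:(auto)); lra.
  - pose proof (H n ltac:(lia)); pose proof (IHn ltac:(auto) ltac:(lia)); lra.
Qed.

Lemma sumR_pos n f k :
  (forall i, (i < n)%nat -> 0 <= f i) -> (k < n)%nat -> 0 < f k -> 0 < sumR n f.
Proof. intros H Hk Hf. pose proof (sumR_ge_term n f k H Hk); lra. Qed.

Lemma sumR_eq0_inv n f :
  (forall i, (i < n)%nat -> 0 <= f i) -> sumR n f = 0 -> forall i, (i < n)%nat -> f i = 0.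
Proof. intros H S i Hi. pose proof (sumR_ge_term n f i H Hi); pose proof (H i Hi); lra. Qed.

Lemma sumR_indicator n i a :
  (i < n)%nat -> sumR n (fun j => if Nat.eqb j i then a else 0) = a.
Proof.
  induction n; intros Hi; simpl; [lia|].
  destruct (Nat.eqb_spec n i) as [->|Hne].
  - rewrite sumR_eq0; [ring|]. intros j Hj. destruct (Nat.eqb_spec j i); [lia|auto].
  - rewrite IHn by lia; ring.
Qed.


Lemma prodR_ext n f g : (forall i, (i < n)%nat -> f i = g i) -> prodR n f = prodR n g.
Proof. induction n; intros H; simpl; auto. rewrite IHn, H; auto. Qed.

Lemma prodR_pos n f : (forall i, (i < n)%nat -> 0 < f i) -> 0 < prodR n f.
Proof. induction n; intros H; simpl; [lra|]. apply Rmult_lt_0_compat; auto. Qed.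

Lemma prodR_mult n f g : prodR n (fun i => f i * g i) = prodR n f * prodR n g.
Proof. induction n; simpl; [ring|]. rewrite IHn; ring. Qed.

Lemma prodR_exp n f : prodR n (fun i => exp (f i)) = exp (sumR n f).
Proof. induction n; simpl; [now rewrite exp_0|]. rewrite IHn, exp_plus; auto. Qed.

Lemma ln_prodR n f :
  (forall i, (i < n)%nat -> 0 < f i) -> ln (prodR n f) = sumR n (fun i => ln (f i)).
Proof.
  induction n; intros H; simpl; [apply ln_1|].
  rewrite ln_mult, IHn; auto. apply prodR_pos; auto.
Qed.

Lemma sumN_ext n f g : (forall i, (i < n)%nat -> f i = g i) -> sumN n f = sumN n g.
Proof. induction n; intros H; simpl; auto. rewrite IHn, H; auto. Qed.

Lemma sumN_eq0_inv n f : sumN n f = 0%nat -> forall k, (k < n)%nat -> f k = 0%nat.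
Proof.
  induction n; simpl; intros H k Hk; [lia|].
  destruct (Nat.eq_dec k n) as [->|]; [lia|]. apply IHn; lia.
Qed.

Lemma ln_le a b : 0 < a -> a <= b -> ln a <= ln b.
Proof. intros Ha [Hab| ->]; [left; apply ln_increasing|]; lra. Qed.

Lemma ln_le_sub1 y : 0 < y -> ln y <= y - 1.
Proof. intros Hy. pose proof (exp_ineq1_le (ln y)). rewrite exp_ln in H; lra. Qed.

Lemma ln_lt_sub1 y : 0 < y -> y <> 1 -> ln y < y - 1.
Proof.
  intros Hy H1. pose proof (exp_ineq1 (ln y) (ln_neq_0 y H1 Hy)).
  rewrite exp_ln in H; lra.
Qed.

Lemma ln_div a b : 0 < a -> 0 < b -> ln (a / b) = ln a - ln b.
Proof.
  intros Ha Hb. unfold Rdiv. rewrite ln_mult, ln_Rinv; auto.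
  apply Rinv_0_lt_compat; auto.
Qed.

Lemma exp_tangent_le a b : exp a * (b - a) <= exp b - exp a.
Proof.
  replace (exp b) with (exp a * exp (b - a)) by (rewrite <- exp_plus; f_equal; ring).
  pose proof (exp_ineq1_le (b - a)); pose proof (exp_pos a); nra.
Qed.

Lemma exp_tangent_lt a b : a <> b -> exp a * (b - a) < exp b - exp a.
Proof.
  intros Hab. replace (exp b) with (exp a * exp (b - a)) by (rewrite <- exp_plus; f_equal; ring).
  pose proof (exp_ineq1 (b - a) ltac:(lra)); pose proof (exp_pos a); nra.
Qed.

Definition eventually (P : nat -> Prop) : Prop :=
  exists N, forall n, (N <= n)%nat -> P n.

Lemma eventually_and (P Q : nat -> Prop) :
  eventually P -> eventually Q -> eventually (fun n => P n /\ Q n).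
Proof. intros [N1 H1] [N2 H2]. exists (max N1 N2). intros; split; [apply H1|apply H2]; lia. Qed.

Lemma eventually_mono (P Q : nat -> Prop) :
  (forall n, P n -> Q n) -> eventually P -> eventually Q.
Proof. intros H [N HN]. exists N; auto. Qed.

Lemma eventually_forall_lt d (P : nat -> nat -> Prop) :
  (forall i, (i < d)%nat -> eventually (P i)) ->
  eventually (fun n => forall i, (i < d)%nat -> P i n).
Proof.
  induction d; intros H; [exists O; intros; lia|].
  destruct (IHd (fun i Hi => H i (Nat.lt_lt_succ_r _ _ Hi))) as [N1 H1].
  destruct (H d (Nat.lt_succ_diag_r d)) as [N2 H2].
  exists (max N1 N2). intros n Hn i Hi.
  destruct (Nat.eq_dec i d) as [->|]; [apply H2|apply H1]; lia.
Qed.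

Lemma Un_cv_eventually_eq u v l :
  eventually (fun n => u n = v n) -> Un_cv v l -> Un_cv u l.
Proof.
  intros [N HN] Hv eps Heps. destruct (Hv eps Heps) as [N2 H2].
  exists (max N N2). intros n Hn. rewrite HN by lia. apply H2; lia.
Qed.

Lemma Un_cv_squeeze a u b l :
  eventually (fun n => a n <= u n <= b n) -> Un_cv a l -> Un_cv b l -> Un_cv u l.
Proof.
  intros [N HN] Ha Hb eps Heps.
  destruct (Ha eps Heps) as [N1 H1], (Hb eps Heps) as [N2 H2].
  exists (max N (max N1 N2)). intros n Hn.
  specialize (HN n ltac:(lia)); specialize (H1 n ltac:(lia)); specialize (H2 n ltac:(lia)).
  unfold Rdist in *. apply Rabs_def2 in H1, H2. apply Rabs_def1; lra.
Qed.

Lemma Un_cv_const l : Un_cv (fun _ => l) l.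
Proof. intros eps Heps. exists O. intros. unfold Rdist. rewrite Rminus_diag, Rabs_R0; lra. Qed.

Lemma CV_sumR n (u : nat -> nat -> R) (l : nat -> R) :
  (forall i, (i < n)%nat -> Un_cv (u i) (l i)) ->
  Un_cv (fun k => sumR n (fun i => u i k)) (sumR n l).
Proof.
  induction n; intros H; simpl; [apply Un_cv_const|].
  apply (CV_plus (fun k => sumR n (fun i => u i k)) (u n)); auto.
Qed.

Lemma Un_cv_eventually_gt u l : Un_cv u l -> 0 < l -> eventually (fun n => l / 2 < u n).
Proof.
  intros Hu Hl. destruct (Hu (l / 2) ltac:(lra)) as [N HN]. exists N. intros n Hn.
  specialize (HN n Hn). unfold Rdist in HN. apply Rabs_def2 in HN. lra.
Qed.

Lemma cv_infty_eventually_ge V M : cv_infty V -> eventually (fun n => M <= V n).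
Proof. intros HV. destruct (HV M) as [N HN]. exists N. intros n Hn. left; auto. Qed.

Lemma cv_infty_mult V u L K :
  cv_infty V -> Un_cv u L -> 0 < L -> eventually (fun n => K <= u n * V n).
Proof.
  intros HV Hu HL.
  apply (eventually_mono (fun n => L / 2 < u n /\ 2 * Rabs K / L <= V n)).
  2: apply eventually_and; [apply Un_cv_eventually_gt|apply cv_infty_eventually_ge]; auto.
  intros n [Hu' HV'].
  assert (Hbound : 0 <= 2 * Rabs K / L).
  { pose proof (Rabs_pos K). apply Rmult_le_pos; [lra|left; apply Rinv_0_lt_compat; lra]. }
  assert (L / 2 * (2 * Rabs K / L) <= u n * V n) by (apply Rmult_le_compat; lra).
  replace (L / 2 * (2 * Rabs K / L)) with (Rabs K) in H by (field; lra).
  pose proof (Rle_abs K); lra.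
Qed.

Lemma ln_le_2sqrt y : 0 < y -> ln y <= 2 * sqrt y.
Proof.
  intros Hy. pose proof (sqrt_lt_R0 y Hy) as Hs.
  replace (ln y) with (2 * ln (sqrt y))
    by (rewrite <- (sqrt_sqrt y) at 2 by lra; rewrite ln_mult by auto; ring).
  pose proof (ln_le_sub1 (sqrt y) Hs); lra.
Qed.

Lemma cv_infty_sqrt V : cv_infty V -> cv_infty (fun n => sqrt (V n)).
Proof.
  intros HV M. destruct (HV (M * M)) as [N HN]. exists N. intros n Hn.
  specialize (HN n Hn). pose proof (Rle_0_sqr M) as HM. unfold Rsqr in HM.
  destruct (Rle_lt_dec M 0).
  - pose proof (sqrt_lt_R0 (V n) ltac:(lra)); lra.
  - rewrite <- (sqrt_square M) by lra. apply sqrt_lt_1_alt; lra.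
Qed.

Lemma cv_infty_ln_div V : cv_infty V -> Un_cv (fun n => ln (V n) / V n) 0.
Proof.
  intros HV.
  apply (Un_cv_squeeze (fun _ => 0) _ (fun n => 2 * / sqrt (V n))); [|apply Un_cv_const|].
  - apply (eventually_mono (fun n => 1 <= V n)); [|apply cv_infty_eventually_ge; auto].
    intros n Hn. pose proof (sqrt_lt_R0 (V n) ltac:(lra)) as Hs.
    pose proof (sqrt_sqrt (V n) ltac:(lra)) as Hss. split.
    + pose proof (ln_le 1 (V n) Rlt_0_1 Hn) as Hln. rewrite ln_1 in Hln.
      apply Rmult_le_pos; [lra|left; apply Rinv_0_lt_compat; lra].
    + replace (2 * / sqrt (V n)) with (2 * sqrt (V n) / V n) by (rewrite <- Hss at 2; field; lra).
      unfold Rdiv. apply Rmult_le_compat_r; [left; apply Rinv_0_lt_compat; lra|].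
      apply ln_le_2sqrt; lra.
  - replace 0 with (2 * 0) by ring. apply CV_mult; [apply Un_cv_const|].
    apply cv_infty_cv_0, cv_infty_sqrt; auto.
Qed.
(** * Complex balance and the Lyapunov function *)

Lemma cplx_eqb_spec d z w :
  cplx_eqb d z w = true <-> (forall i, (i < d)%nat -> z i = w i).
Proof.
  induction d; simpl; [split; intros; auto; lia|].
  rewrite Bool.andb_true_iff, Nat.eqb_eq, IHd. split.
  - intros [Hd H] i Hi. destruct (Nat.eq_dec i d) as [->|]; auto. apply H; lia.
  - intros H. split; [|intros]; apply H; lia.
Qed.

Section ClassSums.
Variable d : nat.

Lemma cplx_eqb_refl z : cplx_eqb d z z = true.
Proof. apply cplx_eqb_spec; auto. Qed.

Lemma cplx_eqb_trans x y z :
  cplx_eqb d x y = true -> cplx_eqb d y z = true -> cplx_eqb d x z = true.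
Proof. rewrite !cplx_eqb_spec. intros H1 H2 i Hi. rewrite H1, H2; auto. Qed.

Lemma cplx_eqb_sym x y : cplx_eqb d x y = cplx_eqb d y x.
Proof.
  apply Bool.eq_true_iff_eq. rewrite !cplx_eqb_spec.
  split; intros H i Hi; symmetry; auto.
Qed.

(* Complexes are compared on their first [d] coordinates only. *)
Definition class_weight (z : cplx) (L : list (cplx * R)) : R :=
  fold_right (fun p s => (if cplx_eqb d (fst p) z then snd p else 0) + s) 0 L.

Definition weighted_sum (g : cplx -> R) (L : list (cplx * R)) : R :=
  fold_right (fun p s => snd p * g (fst p) + s) 0 L.

Definition drop_class (z : cplx) (L : list (cplx * R)) : list (cplx * R) :=
  filter (fun p => negb (cplx_eqb d (fst p) z)) L.

Variable g : cplx -> R.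
Hypothesis g_compat : forall z w, cplx_eqb d z w = true -> g z = g w.

Lemma weighted_sum_drop_class z L :
  weighted_sum g L = g z * class_weight z L + weighted_sum g (drop_class z L).
Proof.
  induction L as [|[w b] L IH]; simpl; [ring|].
  destruct (cplx_eqb d w z) eqn:E; simpl; rewrite IH; [rewrite (g_compat w z E)|]; ring.
Qed.

Lemma class_weight_drop_class z0 z L :
  class_weight z (drop_class z0 L) = if cplx_eqb d z0 z then 0 else class_weight z L.
Proof.
  induction L as [|[w b] L IH]; simpl; [destruct (cplx_eqb d z0 z); auto|].
  destruct (cplx_eqb d w z0) eqn:E0; simpl; rewrite IH;
    destruct (cplx_eqb d z0 z) eqn:E; destruct (cplx_eqb d w z) eqn:E1; try ring;
    exfalso; rewrite cplx_eqb_sym in E0;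
    first [ rewrite cplx_eqb_sym, (cplx_eqb_trans _ _ _ E0 E) in E1
          | rewrite (cplx_eqb_trans _ _ _ E0 E1) in E
          | rewrite cplx_eqb_sym in E; rewrite cplx_eqb_sym, (cplx_eqb_trans _ _ _ E1 E) in E0 ];
    discriminate.
Qed.

Lemma weighted_sum_eq0 L :
  (forall z, class_weight z L = 0) -> weighted_sum g L = 0.
Proof.
  remember (length L) as n eqn:Hn. revert L Hn.
  induction n as [n IH] using lt_wf_ind. intros L Hn Hw.
  destruct L as [|[z b] L']; [reflexivity|].
  rewrite (weighted_sum_drop_class z), Hw.
  assert (Hlen : (length (drop_class z ((z, b) :: L')) < n)%nat).
  { unfold drop_class. simpl. rewrite cplx_eqb_refl. simpl.
    pose proof (filter_length_le (fun p => negb (cplx_eqb d (fst p) z)) L'). simpl in Hn. lia. }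
  rewrite (IH _ Hlen _ eq_refl); [ring|].
  intros z'. rewrite class_weight_drop_class, Hw. destruct (cplx_eqb d z z'); auto.
Qed.
End ClassSums.

Fixpoint reaction_list (zs zt : nat -> cplx) (a : nat -> R) (m : nat) : list (cplx * R) :=
  match m with
  | O => nil
  | S m' => (zt m', a m') :: (zs m', - a m') :: reaction_list zs zt a m'
  end.

Lemma balanced_sum d m (a : nat -> R) (zs zt : nat -> cplx) (g : cplx -> R) :
  (forall z, sumR m (fun k => if cplx_eqb d (zt k) z then a k else 0)
           = sumR m (fun k => if cplx_eqb d (zs k) z then a k else 0)) ->
  (forall z w, cplx_eqb d z w = true -> g z = g w) ->
  sumR m (fun k => a k * g (zt k)) = sumR m (fun k => a k * g (zs k)).
Proof.
  intros Hbal Hg.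
  assert (Hsum : weighted_sum g (reaction_list zs zt a m)
                 = sumR m (fun k => a k * g (zt k)) - sumR m (fun k => a k * g (zs k))).
  { clear Hbal. induction m; simpl; [ring|]. unfold weighted_sum in *; simpl. rewrite IHm; ring. }
  assert (Hclass : forall z, class_weight d z (reaction_list zs zt a m)
    = sumR m (fun k => if cplx_eqb d (zt k) z then a k else 0)
      - sumR m (fun k => if cplx_eqb d (zs k) z then a k else 0)).
  { intros z. clear Hbal Hsum. induction m; simpl; [ring|].
    unfold class_weight in *; simpl. rewrite IHm.
    destruct (cplx_eqb d (zt m) z), (cplx_eqb d (zs m) z); ring. }
  assert (weighted_sum g (reaction_list zs zt a m) = 0).
  { apply (weighted_sum_eq0 d g Hg). intros z. rewrite Hclass, Hbal; ring. }
  lra.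
Qed.

Lemma entropy_term_eq x c : 0 < x -> 0 < c ->
  x * (ln x - ln c - 1) + c = x * ((c / x - 1) - ln (c / x)).
Proof. intros Hx Hc. rewrite ln_div by auto. field. lra. Qed.

Lemma entropy_term_nonneg x c : 0 < x -> 0 < c -> 0 <= x * (ln x - ln c - 1) + c.
Proof.
  intros Hx Hc. rewrite entropy_term_eq by auto.
  pose proof (ln_le_sub1 (c / x) (Rdiv_lt_0_compat _ _ Hc Hx)). nra.
Qed.

Lemma entropy_term_pos x c : 0 < x -> 0 < c -> x <> c -> 0 < x * (ln x - ln c - 1) + c.
Proof.
  intros Hx Hc Hne. rewrite entropy_term_eq by auto.
  assert (c / x <> 1).
  { intro E. apply Hne. replace c with (c / x * x) by (field; lra). rewrite E; ring. }
  pose proof (ln_lt_sub1 (c / x) (Rdiv_lt_0_compat _ _ Hc Hx) H). nra.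
Qed.

Lemma derivable_entropy_term c y : 0 < y ->
  derivable_pt_lim (fun t => t * (ln t - ln c - 1) + c) y (ln y - ln c).
Proof.
  intros Hy.
  replace (ln y - ln c) with ((1 * (ln y - ln c - 1) + y * (/ y - 0 - 0)) + 0) by (field; lra).
  apply (derivable_pt_lim_plus (fun t => t * (ln t - ln c - 1)) (fun _ => c));
    [|apply derivable_pt_lim_const].
  apply (derivable_pt_lim_mult id (fun t => ln t - ln c - 1)); [apply derivable_pt_lim_id|].
  apply (derivable_pt_lim_minus (fun t => ln t - ln c) (fun _ => 1));
    [|apply derivable_pt_lim_const].
  apply (derivable_pt_lim_minus ln (fun _ => ln c)); [|apply derivable_pt_lim_const].
  apply derivable_pt_lim_ln; auto.
Qed.

Lemma lyap_self d c : lyap d c c = 0.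
Proof. apply sumR_eq0. intros; ring. Qed.

Lemma lyap_pos d c x : pos_vec d c -> pos_vec d x ->
  (exists i, (i < d)%nat /\ x i <> c i) -> 0 < lyap d c x.
Proof.
  intros Hc Hx [i [Hi Hne]]. apply (sumR_pos d _ i); auto.
  - intros; apply entropy_term_nonneg; auto.
  - apply entropy_term_pos; auto.
Qed.

Lemma derivable_pt_lim_sumR n (F : nat -> R -> R) (D : nat -> R) x :
  (forall j, (j < n)%nat -> derivable_pt_lim (F j) x (D j)) ->
  derivable_pt_lim (fun t => sumR n (fun j => F j t)) x (sumR n D).
Proof.
  induction n; intros H; simpl; [apply derivable_pt_lim_const|].
  apply (derivable_pt_lim_plus (fun t => sumR n (fun j => F j t)) (F n)); auto.
Qed.

Lemma derivable_lyap_upd d c x i : pos_vec d x -> (i < d)%nat ->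
  derivable_pt_lim (fun t => lyap d c (upd x i t)) (x i) (ln (x i) - ln (c i)).
Proof.
  intros Hx Hi. unfold lyap.
  rewrite <- (sumR_indicator d i (ln (x i) - ln (c i)) Hi).
  apply (derivable_pt_lim_sumR d
           (fun j t => upd x i t j * (ln (upd x i t j) - ln (c j) - 1) + c j)).
  intros j Hj. unfold upd. destruct (Nat.eqb_spec j i) as [->|].
  - apply derivable_entropy_term, Hx; auto.
  - apply derivable_pt_lim_const.
Qed.

Lemma monom_exp d x c v : pos_vec d x -> pos_vec d c ->
  monom d x v = monom d c v * exp (sumR d (fun i => INR (v i) * (ln (x i) - ln (c i)))).
Proof.
  intros Hx Hc. unfold monom. rewrite <- prodR_exp, <- prodR_mult.
  apply prodR_ext. intros i Hi.
  assert (Hexp : forall n y, exp y ^ n = exp (INR n * y)).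
  { induction n; intros y; simpl; [rewrite Rmult_0_l, exp_0; auto|].
    rewrite IHn, <- exp_plus. f_equal. destruct n; simpl; ring. }
  rewrite <- Hexp, <- Rpow_mult_distr. f_equal.
  pose proof (Hx i Hi); pose proof (Hc i Hi).
  unfold Rminus. rewrite exp_plus, exp_Ropp, !exp_ln by auto. field. lra.
Qed.

Definition flux d (kappa : nat -> R) (nu : nat -> cplx) (c : vec) (k : nat) : R :=
  kappa k * monom d c (nu k).

Lemma flux_pos d m kappa nu c : (forall k, (k < m)%nat -> 0 < kappa k) -> pos_vec d c ->
  forall k, (k < m)%nat -> 0 < flux d kappa nu c k.
Proof.
  intros Hk Hc k Hkm. apply Rmult_lt_0_compat; auto.
  apply prodR_pos. intros i Hi. apply pow_lt, Hc; auto.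
Qed.

Section Dissipation.
Variables (d m : nat) (nu nu' : nat -> cplx) (kappa : nat -> R) (c x : vec).
Hypothesis kappa_pos : forall k, (k < m)%nat -> 0 < kappa k.
Hypothesis c_balanced : complex_balanced d m nu nu' kappa c.
Hypothesis x_pos : pos_vec d x.

Let grad i := ln (x i) - ln (c i).
Let dot (v : cplx) := sumR d (fun i => INR (v i) * grad i).
Let w k := flux d kappa nu c k.

Let c_pos : pos_vec d c.
Proof. apply c_balanced. Qed.

Let w_pos k : (k < m)%nat -> 0 < w k.
Proof. apply flux_pos; auto. Qed.

Lemma lyap_drift_eq :
  sumR d (fun i => grad i * drift d m nu nu' kappa x i)
  = sumR m (fun k => w k * exp (dot (nu k)) * (dot (nu' k) - dot (nu k))).
Proof.
  unfold drift.
  rewrite (sumR_ext d _ (fun i => sumR m (fun k =>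
             grad i * (kappa k * monom d x (nu k) * (INR (nu' k i) - INR (nu k i))))))
    by (intros; rewrite <- sumR_scal; auto).
  rewrite sumR_swap. apply sumR_ext. intros k Hk.
  rewrite (sumR_ext d _ (fun i => kappa k * monom d x (nu k)
             * (INR (nu' k i) * grad i - INR (nu k i) * grad i))) by (intros; ring).
  rewrite sumR_scal, sumR_minus, (monom_exp d x c (nu k) x_pos c_pos).
  unfold w, flux, dot, grad. ring.
Qed.

Lemma balanced_exp_dot :
  sumR m (fun k => w k * exp (dot (nu' k))) = sumR m (fun k => w k * exp (dot (nu k))).
Proof.
  apply (balanced_sum d m w nu nu' (fun z => exp (dot z))); [apply c_balanced|].
  intros z z' E. rewrite cplx_eqb_spec in E. unfold dot. f_equal.
  apply sumR_ext. intros i Hi. rewrite E; auto.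
Qed.

(* Tangent-line gap of [exp]; by complex balance the gaps sum to minus the
   derivative of [lyap] along the drift. *)
Let gap k := (w k * exp (dot (nu' k)) - w k * exp (dot (nu k)))
             - w k * exp (dot (nu k)) * (dot (nu' k) - dot (nu k)).

Let gap_nonneg k : (k < m)%nat -> 0 <= gap k.
Proof.
  intros Hk. pose proof (exp_tangent_le (dot (nu k)) (dot (nu' k))).
  pose proof (w_pos k Hk). unfold gap. nra.
Qed.

Let lyap_drift_gap :
  sumR d (fun i => grad i * drift d m nu nu' kappa x i) = - sumR m gap.
Proof. unfold gap. rewrite lyap_drift_eq, !sumR_minus, balanced_exp_dot. ring. Qed.

Lemma lyap_drift_nonpos : sumR d (fun i => grad i * drift d m nu nu' kappa x i) <= 0.
Proof. rewrite lyap_drift_gap. pose proof (sumR_nonneg m gap gap_nonneg). lra. Qed.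

Lemma lyap_drift_eq0_dot :
  sumR d (fun i => grad i * drift d m nu nu' kappa x i) = 0 ->
  forall k, (k < m)%nat -> dot (nu k) = dot (nu' k).
Proof.
  intros H0 k Hk. rewrite lyap_drift_gap in H0.
  destruct (Req_dec (dot (nu k)) (dot (nu' k))) as [|Hne]; auto. exfalso.
  assert (0 < gap k).
  { pose proof (exp_tangent_lt _ _ Hne). pose proof (w_pos k Hk). unfold gap. nra. }
  pose proof (sumR_pos m gap k gap_nonneg Hk H). lra.
Qed.

Hypothesis x_compatible : in_stoich d m nu nu' (fun i => x i - c i).

(* Because [x - c] lies in the stoichiometric subspace and every reaction vector
   is orthogonal to [grad], so is [x - c]; each term [(x i - c i) grad i] is [>= 0]
   since [ln] is increasing, hence they all vanish. *)
Lemma lyap_drift_eq0_iff :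
  sumR d (fun i => grad i * drift d m nu nu' kappa x i) = 0 <->
  forall i, (i < d)%nat -> x i = c i.
Proof.
  split.
  - intros H0. pose proof (lyap_drift_eq0_dot H0) as Hdot. destruct x_compatible as [a Ha].
    assert (Horth : sumR d (fun i => (x i - c i) * grad i) = 0).
    { rewrite (sumR_ext d _ (fun i => sumR m (fun k =>
                 a k * (INR (nu' k i) * grad i - INR (nu k i) * grad i)))).
      2:{ intros i Hi. rewrite Ha, Rmult_comm, <- sumR_scal by auto.
          apply sumR_ext. intros; ring. }
      rewrite sumR_swap. apply sumR_eq0. intros k Hk.
      rewrite sumR_scal, sumR_minus. fold (dot (nu' k)) (dot (nu k)). rewrite Hdot by auto. ring. }
    assert (Hsign : forall i, (i < d)%nat -> 0 <= (x i - c i) * grad i /\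
                     ((x i - c i) * grad i = 0 -> x i = c i)).
    { intros i Hi. unfold grad. pose proof (x_pos i Hi); pose proof (c_pos i Hi).
      destruct (Rtotal_order (x i) (c i)) as [h|[h|h]].
      - pose proof (ln_increasing _ _ H h). split; [nra|intros; nra].
      - rewrite h. split; [lra|auto].
      - pose proof (ln_increasing _ _ H1 h). split; [nra|intros; nra]. }
    intros i Hi. apply Hsign; auto.
    apply (sumR_eq0_inv d _ (fun j Hj => proj1 (Hsign j Hj)) Horth i Hi).
  - intros H. apply sumR_eq0. intros i Hi. unfold grad. rewrite H by auto. ring.
Qed.
End Dissipation.

Lemma lyapunov_at_balanced d m nu nu' kappa c :
  (forall k, (k < m)%nat -> 0 < kappa k) ->
  complex_balanced d m nu nu' kappa c ->
  lyap d c c = 0 /\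
  (forall x : vec, pos_vec d x -> in_stoich d m nu nu' (fun i => x i - c i) ->
     (exists i, (i < d)%nat /\ x i <> c i) -> 0 < lyap d c x) /\
  (forall x : vec, pos_vec d x -> in_stoich d m nu nu' (fun i => x i - c i) ->
     exists g : vec,
       (forall i, (i < d)%nat ->
          derivable_pt_lim (fun t => lyap d c (upd x i t)) (x i) (g i)) /\
       sumR d (fun i => g i * drift d m nu nu' kappa x i) <= 0 /\
       (sumR d (fun i => g i * drift d m nu nu' kappa x i) = 0 <->
        forall i, (i < d)%nat -> x i = c i)).
Proof.
  intros Hk Hcb. split; [apply lyap_self|split].
  - intros x Hx _. apply lyap_pos; auto. apply Hcb.
  - intros x Hx Hst. exists (fun i => ln (x i) - ln (c i)). split; [|split].
    + intros; apply derivable_lyap_upd; auto.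
    + apply (lyap_drift_nonpos d m nu nu' kappa c x Hk Hcb Hx).
    + apply (lyap_drift_eq0_iff d m nu nu' kappa c x Hk Hcb Hx Hst).
Qed.

(** * Large-volume asymptotics of the Poisson product *)

Lemma ln_sub_bounds u v : 0 < u -> 0 < v -> (v - u) / v <= ln v - ln u <= (v - u) / u.
Proof.
  intros Hu Hv. split.
  - pose proof (ln_le_sub1 (u / v) (Rdiv_lt_0_compat _ _ Hu Hv)).
    rewrite ln_div in H by auto. replace ((v - u) / v) with (- (u / v - 1)) by (field; lra). lra.
  - pose proof (ln_le_sub1 (v / u) (Rdiv_lt_0_compat _ _ Hv Hu)).
    rewrite ln_div in H by auto. replace ((v - u) / u) with (v / u - 1) by (field; lra). lra.
Qed.

Lemma mul_ln_succ_le n : INR n * (ln (INR n + 1) - ln (INR n)) <= 1.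
Proof.
  destruct n as [|n]; [simpl; lra|].
  pose proof (lt_0_INR (S n) ltac:(lia)) as Hn.
  pose proof (proj2 (ln_sub_bounds (INR (S n)) (INR (S n) + 1) Hn ltac:(lra))).
  apply Rmult_le_compat_l with (r := INR (S n)) in H; [|lra].
  replace (INR (S n) * ((INR (S n) + 1 - INR (S n)) / INR (S n))) with 1 in H by (field; lra).
  exact H.
Qed.

Lemma ln_fact_lower n : INR n * ln (INR n) - INR n <= ln (INR (fact n)).
Proof.
  induction n; [simpl; rewrite ln_1; lra|].
  rewrite fact_simpl, mult_INR, ln_mult, S_INR by (apply lt_0_INR; pose proof (lt_O_fact n); lia).
  pose proof (mul_ln_succ_le n). nra.
Qed.

Lemma ln_fact_upper n : ln (INR (fact n)) <= (INR n + 1) * ln (INR n + 1) - INR n.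
Proof.
  induction n; [simpl; rewrite Rplus_0_l, ln_1; lra|].
  rewrite fact_simpl, mult_INR, ln_mult, S_INR by (apply lt_0_INR; pose proof (lt_O_fact n); lia).
  pose proof (pos_INR n).
  pose proof (proj1 (ln_sub_bounds (INR n + 1) (INR n + 1 + 1) ltac:(lra) ltac:(lra))).
  apply Rmult_le_compat_l with (r := INR n + 1 + 1) in H0; [|lra].
  replace ((INR n + 1 + 1) * ((INR n + 1 + 1 - (INR n + 1)) / (INR n + 1 + 1))) with 1 in H0
    by (field; lra).
  nra.
Qed.

Section PoissonCoordinate.
Variables (V : nat -> R) (x : nat -> nat) (y c : R).
Hypothesis V_pos : forall n, 0 < V n.
Hypothesis V_infty : cv_infty V.
Hypothesis y_pos : 0 < y.
Hypothesis c_pos : 0 < c.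
Hypothesis x_cv : Un_cv (fun n => INR (x n) / V n) y.

Let q n := INR (x n) / V n.
Let stirling_error n := ln (INR (fact (x n))) - INR (x n) * ln (INR (x n)) + INR (x n).

Let stirling_error_bounds n : 0 <= stirling_error n <= ln (INR (x n) + 1) + 1.
Proof.
  unfold stirling_error. pose proof (ln_fact_lower (x n)). pose proof (ln_fact_upper (x n)).
  pose proof (mul_ln_succ_le (x n)). nra.
Qed.

Let stirling_error_cv : Un_cv (fun n => stirling_error n / V n) 0.
Proof.
  apply (Un_cv_squeeze (fun _ => 0) _ (fun n => ln (V n) / V n + (ln (q n + 1) + 1) * / V n));
    [|apply Un_cv_const|].
  - apply (eventually_mono (fun n => 1 <= V n)); [|apply cv_infty_eventually_ge; auto].
    intros n Hn. pose proof (stirling_error_bounds n). pose proof (V_pos n).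
    pose proof (pos_INR (x n)).
    assert (0 <= q n) by (apply Rmult_le_pos; [lra|left; apply Rinv_0_lt_compat; auto]).
    assert (ln (INR (x n) + 1) <= ln (V n) + ln (q n + 1)).
    { rewrite <- ln_mult by lra. apply ln_le; [lra|].
      unfold q. replace (V n * (INR (x n) / V n + 1)) with (INR (x n) + V n) by (field; lra). lra. }
    split; [apply Rmult_le_pos; [lra|left; apply Rinv_0_lt_compat; auto]|].
    replace (ln (V n) / V n + (ln (q n + 1) + 1) * / V n)
      with ((ln (V n) + ln (q n + 1) + 1) / V n) by (field; lra).
    apply Rmult_le_compat_r; [left; apply Rinv_0_lt_compat; auto|lra].
  - replace 0 with (0 + (ln (y + 1) + 1) * 0) by ring.
    apply CV_plus; [apply cv_infty_ln_div; auto|].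
    apply CV_mult; [|apply cv_infty_cv_0; auto].
    apply (CV_plus (fun n => ln (q n + 1)) (fun _ => 1)); [|apply Un_cv_const].
    apply (continuity_seq ln (fun n => q n + 1)).
    + apply derivable_continuous_pt. exists (/ (y + 1)). apply derivable_pt_lim_ln. lra.
    + apply (CV_plus q (fun _ => 1)); [apply x_cv|apply Un_cv_const].
Qed.

Lemma scaled_log_poisson_coord_cv :
  Un_cv (fun n => - / V n * ln ((V n * c) ^ x n / INR (fact (x n)) * exp (- (V n * c))))
        (y * (ln y - ln c - 1) + c).
Proof.
  set (phi t := t * (ln t - ln c - 1) + c).
  apply Un_cv_eventually_eq with (v := fun n => phi (q n) + stirling_error n / V n).
  - apply (eventually_mono (fun n => y / 2 < q n)); [|apply Un_cv_eventually_gt; auto].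
    intros n Hn. pose proof (V_pos n).
    assert (Hx : 0 < INR (x n)).
    { replace (INR (x n)) with (q n * V n) by (unfold q; field; lra). nra. }
    pose proof (pow_lt (V n * c) (x n) ltac:(nra)). pose proof (INR_fact_lt_0 (x n)).
    rewrite ln_mult, ln_div, ln_pow, ln_exp, ln_mult
      by (try apply Rdiv_lt_0_compat; auto using exp_pos; nra).
    unfold phi, q, stirling_error. rewrite ln_div by lra. field. lra.
  - replace (y * (ln y - ln c - 1) + c) with (phi y + 0) by (unfold phi; ring).
    apply CV_plus; [|apply stirling_error_cv].
    apply (continuity_seq phi q); [|apply x_cv].
    apply derivable_continuous_pt. eexists. apply derivable_entropy_term; auto.
Qed.
End PoissonCoordinate.

Lemma poisson_factor_pos Vol ci n :
  0 < Vol -> 0 < ci -> 0 < (Vol * ci) ^ n / INR (fact n) * exp (- (Vol * ci)).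
Proof.
  intros HV Hc. apply Rmult_lt_0_compat; [|apply exp_pos].
  apply Rdiv_lt_0_compat; [apply pow_lt; nra|apply INR_fact_lt_0].
Qed.

Lemma poisson_pos d Vol c x : 0 < Vol -> pos_vec d c -> 0 < poisson d Vol c x.
Proof. intros HV Hc. apply prodR_pos. intros i Hi. apply poisson_factor_pos, Hc; auto. Qed.

Lemma scaled_log_poisson_cv d (V : nat -> R) (c y : vec) (Y : nat -> cplx) :
  (forall n, 0 < V n) -> cv_infty V -> pos_vec d c -> pos_vec d y ->
  (forall i, (i < d)%nat -> Un_cv (fun n => INR (Y n i) / V n) (y i)) ->
  Un_cv (fun n => - / V n * ln (poisson d (V n) c (Y n))) (lyap d c y).
Proof.
  intros V_pos V_infty Hc Hy HY. unfold lyap.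
  apply Un_cv_eventually_eq with (v := fun n => sumR d (fun i =>
    - / V n * ln ((V n * c i) ^ Y n i / INR (fact (Y n i)) * exp (- (V n * c i))))).
  - exists O. intros n _. unfold poisson. rewrite ln_prodR, <- sumR_scal; auto.
    intros i Hi. apply poisson_factor_pos, Hc; auto.
  - apply (CV_sumR d (fun i n =>
      - / V n * ln ((V n * c i) ^ Y n i / INR (fact (Y n i)) * exp (- (V n * c i))))).
    intros i Hi. apply scaled_log_poisson_coord_cv; auto.
Qed.

(** * The Poisson product has total mass at most one *)

Lemma exp_partial_sum_le lam N :
  0 <= lam -> sumR N (fun j => lam ^ j / INR (fact j)) <= exp lam.
Proof.
  intros Hlam. destruct N as [|N]; [left; apply exp_pos|].
  assert (Hsum : forall f n, sumR (S n) f = sum_f_R0 f n).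
  { intros f n. induction n; simpl in *; [ring|]. rewrite <- IHn. auto. }
  rewrite Hsum. unfold exp. destruct (exist_exp lam) as [l Hl]. simpl.
  rewrite (sum_eq _ (fun j => / INR (fact j) * lam ^ j)) by (intros; unfold Rdiv; ring).
  apply (sum_incr _ N l Hl). intros j.
  apply Rmult_le_pos; [left; apply Rinv_0_lt_compat, INR_fact_lt_0|apply pow_le; auto].
Qed.

Lemma poisson_partial_sum_le1 lam N :
  0 <= lam -> sumR N (fun j => lam ^ j / INR (fact j) * exp (- lam)) <= 1.
Proof.
  intros Hlam.
  rewrite (sumR_ext N _ (fun j => exp (- lam) * (lam ^ j / INR (fact j)))) by (intros; ring).
  rewrite sumR_scal.
  replace 1 with (exp (- lam) * exp lam) by (rewrite <- exp_plus, Rplus_opp_l; apply exp_0).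
  apply Rmult_le_compat_l; [left; apply exp_pos|apply exp_partial_sum_le; auto].
Qed.

Definition list_sum (h : cplx -> R) (l : list cplx) : R :=
  fold_right (fun x s => h x + s) 0 l.

Lemma list_sum_ext h1 h2 l : (forall x, In x l -> h1 x = h2 x) -> list_sum h1 l = list_sum h2 l.
Proof. induction l; simpl; intros H; auto. rewrite H, IHl; auto. Qed.

Lemma list_sum_scal h a l : list_sum (fun x => a * h x) l = a * list_sum h l.
Proof. induction l; simpl; [ring|]. rewrite IHl; ring. Qed.

Lemma list_sum_map h f l : list_sum h (map f l) = list_sum (fun x => h (f x)) l.
Proof. induction l; simpl; auto. rewrite IHl; auto. Qed.

Lemma list_sum_by_coord h k M l : (forall x, In x l -> (x k < M)%nat) ->
  list_sum h l = sumR M (fun j => list_sum h (filter (fun x => Nat.eqb (x k) j) l)).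
Proof.
  induction l as [|x l IH]; intros H; simpl; [rewrite sumR_eq0; auto|].
  rewrite (sumR_ext M _ (fun j => (if Nat.eqb j (x k) then h x else 0)
             + list_sum h (filter (fun x => Nat.eqb (x k) j) l))).
  2:{ intros j Hj. simpl. rewrite (Nat.eqb_sym j). destruct (Nat.eqb (x k) j); simpl; ring. }
  rewrite sumR_plus, sumR_indicator by (apply H; simpl; auto).
  rewrite IH by (intros; apply H; simpl; auto). reflexivity.
Qed.

Definition max_coord k (l : list cplx) : nat := fold_right (fun x acc => max (x k) acc) 0%nat l.

Lemma max_coord_spec k l x : In x l -> (x k <= max_coord k l)%nat.
Proof.
  induction l; simpl; intros H; [contradiction|].
  destruct H as [->|H]; [|specialize (IHl H)]; lia.
Qed.

Definition zero_coord k (x : cplx) : cplx := fun i => if Nat.eqb i k then 0%nat else x i.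

(* Induction on [d], splitting the states by their last coordinate. *)
Lemma product_mass_le1 (F : nat -> nat -> R) :
  (forall i j, 0 <= F i j) -> (forall i N, sumR N (F i) <= 1) ->
  forall d l, NoDup l -> (forall x, In x l -> is_state d x) ->
  list_sum (fun x => prodR d (fun i => F i (x i))) l <= 1.
Proof.
  intros F_nonneg F_sum d. induction d as [|d IH]; intros l Hnd Hst.
  - destruct l as [|x [|y l]]; simpl; try lra. exfalso.
    assert (x = y) as <- by (apply functional_extensionality; intros i;
                             rewrite (Hst x), (Hst y); simpl; auto; lia).
    inversion Hnd as [|? ? Hnotin]. apply Hnotin; simpl; auto.
  - rewrite (list_sum_by_coord _ d (S (max_coord d l)) l)
      by (intros x Hx; pose proof (max_coord_spec d l x Hx); lia).
    apply Rle_trans with (sumR (S (max_coord d l)) (F d)); [|apply F_sum].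
    apply sumR_le. intros j _.
    set (lj := filter (fun x => Nat.eqb (x d) j) l).
    rewrite (list_sum_ext _ (fun x => F d j * prodR d (fun i => F i (zero_coord d x i)))).
    2:{ intros x Hx. apply filter_In in Hx as [_ Hx]. apply Nat.eqb_eq in Hx. simpl.
        rewrite Hx, Rmult_comm. f_equal. apply prodR_ext. intros i Hi.
        unfold zero_coord. destruct (Nat.eqb_spec i d); auto; lia. }
    rewrite list_sum_scal, <- (list_sum_map (fun y => prodR d (fun i => F i (y i)))).
    assert (list_sum (fun y => prodR d (fun i => F i (y i))) (map (zero_coord d) lj) <= 1).
    { apply IH.
      - apply NoDup_map_NoDup_ForallPairs; [|apply NoDup_filter; auto].
        intros x y Hx Hy E. apply filter_In in Hx as [_ Hx], Hy as [_ Hy].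
        apply Nat.eqb_eq in Hx, Hy. apply functional_extensionality. intros i.
        destruct (Nat.eq_dec i d) as [->|]; [congruence|].
        apply (f_equal (fun z => z i)) in E. unfold zero_coord in E.
        destruct (Nat.eqb_spec i d); auto; lia.
      - intros z Hz. apply in_map_iff in Hz as [x [<- Hx]].
        apply filter_In in Hx as [Hx _]. intros i Hi. unfold zero_coord.
        destruct (Nat.eqb_spec i d); auto. apply (Hst x Hx). lia. }
    pose proof (F_nonneg d j). nra.
Qed.

Lemma poisson_mass_le1 d Vol c l : 0 < Vol -> pos_vec d c -> NoDup l ->
  (forall x, In x l -> is_state d x) -> list_sum (poisson d Vol c) l <= 1.
Proof.
  intros HV Hc Hnd Hst.
  set (F i j := if Nat.ltb i d then (Vol * c i) ^ j / INR (fact j) * exp (- (Vol * c i)) else 0).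
  rewrite (list_sum_ext _ (fun x => prodR d (fun i => F i (x i)))).
  2:{ intros x _. apply prodR_ext. intros i Hi. unfold F. destruct (Nat.ltb_spec i d); auto; lia. }
  apply product_mass_le1; auto.
  - intros i j. unfold F. destruct (Nat.ltb_spec i d); [|lra].
    left; apply poisson_factor_pos, Hc; auto.
  - intros i N. unfold F. destruct (Nat.ltb_spec i d).
    + apply poisson_partial_sum_le1. pose proof (Hc i H). nra.
    + rewrite sumR_eq0; auto; lra.
Qed.

(** * Firing reactions inside a closed component *)

Fixpoint sumZ (n : nat) (f : nat -> Z) : Z :=
  match n with O => 0%Z | S n' => (sumZ n' f + f n')%Z end.

Lemma sumZ_ext n f g : (forall i, (i < n)%nat -> f i = g i) -> sumZ n f = sumZ n g.
Proof. induction n; intros H; simpl; auto. rewrite IHn, H; auto. Qed.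

Lemma IZR_sumZ n f : IZR (sumZ n f) = sumR n (fun k => IZR (f k)).
Proof. induction n; simpl; auto. rewrite plus_IZR, IHn; auto. Qed.

Definition incr (p : nat -> nat) (k : nat) : nat -> nat :=
  fun j => if Nat.eqb j k then S (p k) else p j.

Lemma exists_lt_of_sumN_sub n (p q : nat -> nat) :
  sumN n (fun k => q k - p k)%nat <> 0%nat -> exists k, (k < n)%nat /\ (p k < q k)%nat.
Proof.
  induction n; simpl; intros H; [lia|].
  destruct (Nat.lt_ge_cases (p n) (q n)); [exists n; split; auto|].
  destruct IHn as [k [Hk Hlt]]; [lia|]. exists k; split; auto.
Qed.

Lemma sumN_sub_incr n p q k : (k < n)%nat -> (p k < q k)%nat ->
  (sumN n (fun j => q j - incr p k j) + 1 = sumN n (fun j => q j - p j))%nat.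
Proof.
  induction n; simpl; intros Hk Hlt; [lia|]. unfold incr at 2.
  destruct (Nat.eq_dec k n) as [->|].
  - rewrite Nat.eqb_refl, (sumN_ext n _ (fun j => q j - p j)%nat); [lia|].
    intros j Hj. unfold incr. destruct (Nat.eqb_spec j n); [lia|auto].
  - destruct (Nat.eqb_spec n k); [lia|]. specialize (IHn ltac:(lia) Hlt). lia.
Qed.

Section Firing.
Variables (d m : nat) (nu nu' : nat -> cplx) (X0 : cplx).

(* [fire p] is the state reached from [X0] by firing every reaction [k] exactly
   [p k] times (in any order); [fireZ] is its integer-valued version, before
   truncation to [nat]. *)
Definition fireZ (p : nat -> nat) (i : nat) : Z :=
  (Z.of_nat (X0 i) + sumZ m (fun k => Z.of_nat (p k) * (Z.of_nat (nu' k i) - Z.of_nat (nu k i))))%Z.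

Definition fire (p : nat -> nat) : cplx :=
  fun i => if Nat.ltb i d then Z.to_nat (fireZ p i) else 0%nat.

Definition all_enabled (p : nat -> nat) : Prop :=
  forall k i, (k < m)%nat -> (i < d)%nat -> (Z.of_nat (nu k i) <= fireZ p i)%Z.

Lemma fireZ_real p i :
  IZR (fireZ p i) = INR (X0 i) + sumR m (fun k => INR (p k) * (INR (nu' k i) - INR (nu k i))).
Proof.
  unfold fireZ. rewrite plus_IZR, IZR_sumZ, <- INR_IZR_INZ. f_equal. apply sumR_ext. intros.
  rewrite mult_IZR, minus_IZR, <- !INR_IZR_INZ. auto.
Qed.

Lemma fireZ_incr p k i : (k < m)%nat ->
  fireZ (incr p k) i = (fireZ p i + Z.of_nat (nu' k i) - Z.of_nat (nu k i))%Z.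
Proof.
  intros Hk. unfold fireZ.
  enough (forall n, (k < n)%nat ->
    (sumZ n (fun j => Z.of_nat (incr p k j) * (Z.of_nat (nu' j i) - Z.of_nat (nu j i)))
     = sumZ n (fun j => Z.of_nat (p j) * (Z.of_nat (nu' j i) - Z.of_nat (nu j i)))
       + Z.of_nat (nu' k i) - Z.of_nat (nu k i))%Z) by (rewrite H; auto; lia).
  induction n; intros Hn; [lia|]. simpl. unfold incr at 2.
  destruct (Nat.eq_dec k n) as [->|].
  - rewrite Nat.eqb_refl, Nat2Z.inj_succ.
    rewrite (sumZ_ext n _ (fun j => Z.of_nat (p j) * (Z.of_nat (nu' j i) - Z.of_nat (nu j i)))%Z);
      [lia|].
    intros j Hj. unfold incr. destruct (Nat.eqb_spec j n); [lia|auto].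
  - destruct (Nat.eqb_spec n k); [lia|]. rewrite IHn by lia. lia.
Qed.

Lemma fire_ext p q : (forall k, (k < m)%nat -> p k = q k) -> fire p = fire q.
Proof.
  intros H. apply functional_extensionality. intros i. unfold fire, fireZ.
  rewrite (sumZ_ext m _ (fun k => Z.of_nat (q k) * (Z.of_nat (nu' k i) - Z.of_nat (nu k i)))%Z);
    auto.
  intros; rewrite H; auto.
Qed.

Lemma fire_zero : is_state d X0 -> fire (fun _ => 0%nat) = X0.
Proof.
  intros HX0. apply functional_extensionality. intros i. unfold fire, fireZ.
  destruct (Nat.ltb_spec i d); [|rewrite HX0; auto].
  rewrite (sumZ_ext m _ (fun _ => 0%Z)) by (intros; simpl; lia).
  replace (sumZ m (fun _ => 0%Z)) with 0%Z by (induction m; simpl; lia). lia.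
Qed.

Variables (kV : nat -> R) (G : cplx -> Prop).
Hypothesis kV_pos : forall k, (k < m)%nat -> 0 < kV k.
Hypothesis G_closed : forall x y, G x -> step d m nu nu' kV x y -> G y.

Lemma closed_fire_incr p k : (k < m)%nat -> all_enabled p -> G (fire p) -> G (fire (incr p k)).
Proof.
  intros Hk Hen HG. apply (G_closed (fire p)); auto. exists k. split; [auto|split].
  - apply Rmult_lt_0_compat; auto. apply prodR_pos. intros i Hi.
    unfold ffact_ind, fire. destruct (Nat.ltb_spec i d); [|lia]. specialize (Hen k i Hk Hi).
    replace (Nat.leb (nu k i) (Z.to_nat (fireZ p i))) with true
      by (symmetry; apply Nat.leb_le; lia).
    apply Rdiv_lt_0_compat; apply INR_fact_lt_0.
  - apply functional_extensionality. intros i. unfold jump, fire.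
    destruct (Nat.ltb_spec i d); auto. rewrite fireZ_incr by auto. specialize (Hen k i Hk H). lia.
Qed.

(* Raise the counts from [p] to [q] one firing at a time. *)
Lemma closed_fire_box s p q :
  (forall k, (k < m)%nat -> (p k <= q k)%nat) ->
  sumN m (fun k => q k - p k)%nat = s ->
  (forall r, (forall k, (k < m)%nat -> (p k <= r k <= q k)%nat) -> all_enabled r) ->
  G (fire p) -> G (fire q).
Proof.
  revert p. induction s as [|s IH]; intros p Hpq Hs Hbox HG.
  - rewrite (fire_ext q p); auto. intros k Hk.
    pose proof (sumN_eq0_inv _ _ Hs k Hk). specialize (Hpq k Hk). simpl in H. lia.
  - destruct (exists_lt_of_sumN_sub m p q) as [k [Hk Hlt]]; [lia|].
    apply (IH (incr p k)).
    + intros j Hj. unfold incr. destruct (Nat.eqb_spec j k); [subst j|]; auto.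
    + pose proof (sumN_sub_incr m p q k Hk Hlt). lia.
    + intros r Hr. apply Hbox. intros j Hj. specialize (Hr j Hj). unfold incr in Hr.
      destruct (Nat.eqb_spec j k); [subst j|]; lia.
    + apply closed_fire_incr; auto.
Qed.

Lemma closed_fire_rounds (cnt : nat -> nat -> nat) (T : nat) :
  is_state d X0 -> G X0 ->
  (forall t k, (k < m)%nat -> (cnt t k <= cnt (S t) k)%nat) ->
  (forall k, (k < m)%nat -> cnt O k = O) ->
  (forall t, (t < T)%nat -> forall r,
     (forall k, (k < m)%nat -> (cnt t k <= r k <= cnt (S t) k)%nat) -> all_enabled r) ->
  forall t, (t <= T)%nat -> G (fire (cnt t)).
Proof.
  intros HX0 GX0 Hmono H0 Hbox. induction t; intros Ht.
  - rewrite (fire_ext _ (fun _ => 0%nat)), fire_zero; auto.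
  - apply (closed_fire_box (sumN m (fun k => cnt (S t) k - cnt t k)%nat) (cnt t));
      [auto|auto|apply Hbox; lia|apply IHt; lia].
Qed.
End Firing.

Section FiringNearRay.
Variables (d m : nat) (nu nu' : nat -> cplx) (b D : nat -> R) (X0 : cplx) (V : R).

(* Covers the reactant demand of every reaction plus the rounding error of
   [p k] around [t * b k]. *)
Definition firing_margin i :=
  sumR m (fun k => (b k + 1) * Rabs (INR (nu' k i) - INR (nu k i)))
  + sumR m (fun k => INR (nu k i)).

Hypothesis V_pos : 0 < V.
Hypothesis b_direction :
  forall i, (i < d)%nat -> sumR m (fun k => b k * (INR (nu' k i) - INR (nu k i))) = D i.
Hypothesis margin_le : forall i, (i < d)%nat ->
  firing_margin i <= INR (X0 i) /\ firing_margin i <= INR (X0 i) + V * D i.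

Lemma fireZ_ge_reactants t p : 0 <= t <= V ->
  (forall k, (k < m)%nat -> Rabs (INR (p k) - t * b k) <= b k + 1) ->
  forall i, (i < d)%nat -> sumR m (fun k => INR (nu k i)) <= IZR (fireZ m nu nu' X0 p i).
Proof.
  intros Ht Hp i Hi. rewrite fireZ_real.
  rewrite (sumR_ext m (fun k => INR (p k) * (INR (nu' k i) - INR (nu k i)))
             (fun k => t * (b k * (INR (nu' k i) - INR (nu k i)))
             + (INR (p k) - t * b k) * (INR (nu' k i) - INR (nu k i)))) by (intros; ring).
  rewrite sumR_plus, sumR_scal, b_direction by auto.
  assert (Herr : - sumR m (fun k => (b k + 1) * Rabs (INR (nu' k i) - INR (nu k i)))
                 <= sumR m (fun k => (INR (p k) - t * b k) * (INR (nu' k i) - INR (nu k i)))).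
  { rewrite <- (Rmult_1_l (sumR _ _)), Ropp_mult_distr_l, <- sumR_scal.
    apply sumR_le. intros k Hk.
    pose proof (Rabs_pos (INR (nu' k i) - INR (nu k i))).
    pose proof (Rle_abs (- ((INR (p k) - t * b k) * (INR (nu' k i) - INR (nu k i))))).
    rewrite Rabs_Ropp, Rabs_mult in H0. specialize (Hp k Hk). nra. }
  (* [X0 + t D] is a convex combination of [X0] and [X0 + V D]. *)
  assert (Hray : firing_margin i <= INR (X0 i) + t * D i).
  { destruct (margin_le i Hi) as [H1 H2].
    apply (Rmult_le_reg_l V); auto.
    replace (V * (INR (X0 i) + t * D i))
      with ((V - t) * INR (X0 i) + t * (INR (X0 i) + V * D i)) by ring.
    replace (V * firing_margin i) with ((V - t) * firing_margin i + t * firing_margin i) by ring.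
    apply Rplus_le_compat; apply Rmult_le_compat_l; lra. }
  unfold firing_margin in Hray. lra.
Qed.

Lemma all_enabled_near_ray t p : 0 <= t <= V ->
  (forall k, (k < m)%nat -> Rabs (INR (p k) - t * b k) <= b k + 1) ->
  all_enabled d m nu nu' X0 p.
Proof.
  intros Ht Hp k i Hk Hi. apply le_IZR. rewrite <- INR_IZR_INZ.
  apply Rle_trans with (sumR m (fun k => INR (nu k i))); [|apply (fireZ_ge_reactants t); auto].
  apply (sumR_ge_term m (fun k => INR (nu k i))); auto. intros; apply pos_INR.
Qed.
End FiringNearRay.

Definition floor_nat (x : R) : nat := Z.to_nat (Int_part x).

Lemma floor_nat_bounds x : 0 <= x -> x - 1 < INR (floor_nat x) <= x.
Proof.
  intros Hx. destruct (base_Int_part x) as [H1 H2].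
  assert (Hneg : (-1 < Int_part x)%Z) by (apply lt_IZR; simpl; lra).
  assert (0 <= Int_part x)%Z by lia.
  unfold floor_nat. rewrite INR_IZR_INZ, Z2Nat.id by auto. lra.
Qed.

Lemma floor_nat_mono x y : 0 <= x -> x <= y -> (floor_nat x <= floor_nat y)%nat.
Proof.
  intros Hx Hxy. destruct (Nat.le_gt_cases (floor_nat x) (floor_nat y)) as [|Hlt]; auto. exfalso.
  pose proof (floor_nat_bounds x Hx). pose proof (floor_nat_bounds y ltac:(lra)).
  apply le_INR in Hlt. rewrite S_INR in Hlt. lra.
Qed.

Lemma floor_nat_0 : floor_nat 0 = 0%nat.
Proof.
  pose proof (floor_nat_bounds 0 ltac:(lra)) as H. destruct (floor_nat 0); auto.
  rewrite S_INR in H. pose proof (pos_INR n). lra.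
Qed.

Lemma kappaV_pos d kappa nu Vol m : 0 < Vol -> (forall k, (k < m)%nat -> 0 < kappa k) ->
  forall k, (k < m)%nat -> 0 < kappaV d kappa nu Vol k.
Proof. intros. apply Rdiv_lt_0_compat; auto. apply powerRZ_lt; auto. Qed.

Section Approach.
Variables (d m : nat) (nu nu' : nat -> cplx) (kappa : nat -> R).
Variables (Vs : nat -> R) (X : nat -> cplx) (xt c a : vec).
Hypothesis kappa_pos : forall k, (k < m)%nat -> 0 < kappa k.
Hypothesis Vs_pos : forall n, 0 < Vs n.
Hypothesis Vs_infty : cv_infty Vs.
Hypothesis X_state : forall n, is_state d (X n).
Hypothesis xt_pos : pos_vec d xt.
Hypothesis X_cv : forall i, (i < d)%nat -> Un_cv (fun n => INR (X n i) / Vs n) (xt i).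
Hypothesis c_balanced : complex_balanced d m nu nu' kappa c.
Hypothesis a_direction : forall i, (i < d)%nat ->
  c i - xt i = sumR m (fun k => a k * (INR (nu' k i) - INR (nu k i))).

Let c_pos : pos_vec d c.
Proof. apply c_balanced. Qed.

Let w k := flux d kappa nu c k.
Let shift := sumR m (fun k => Rabs (a k) / w k).

(* Since [c] is an equilibrium, [sum_k w k (nu' k - nu k) = 0]: adding a multiple of
   [w] to [a] keeps the direction [c - xt] and makes every coefficient nonnegative. *)
Definition firing_rate k := a k + shift * w k.

Lemma firing_rate_nonneg k : (k < m)%nat -> 0 <= firing_rate k.
Proof.
  intros Hk. pose proof (flux_pos d m kappa nu c kappa_pos c_pos k Hk) as Hw. fold (w k) in Hw.
  assert (Rabs (a k) / w k <= shift).
  { apply (sumR_ge_term m (fun k => Rabs (a k) / w k)); auto. intros j Hj.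
    apply Rmult_le_pos; [apply Rabs_pos|].
    left; apply Rinv_0_lt_compat, (flux_pos d m kappa nu c kappa_pos c_pos j Hj). }
  apply Rmult_le_compat_r with (r := w k) in H; [|lra].
  replace (Rabs (a k) / w k * w k) with (Rabs (a k)) in H by (field; lra).
  pose proof (Rle_abs (- a k)). rewrite Rabs_Ropp in H0. unfold firing_rate. lra.
Qed.

Lemma firing_rate_direction i : (i < d)%nat ->
  sumR m (fun k => firing_rate k * (INR (nu' k i) - INR (nu k i))) = c i - xt i.
Proof.
  intros Hi. unfold firing_rate. rewrite a_direction by auto.
  rewrite (sumR_ext m _ (fun k => a k * (INR (nu' k i) - INR (nu k i))
             + shift * (w k * (INR (nu' k i) - INR (nu k i))))) by (intros; ring).
  rewrite sumR_plus, sumR_scal. destruct c_balanced as [_ [Hdrift _]].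
  specialize (Hdrift i Hi). unfold drift in Hdrift. unfold w, flux. rewrite Hdrift. ring.
Qed.

(* Firing at these rates for [floor V] rounds moves [X ~ V xt] to [approach ~ V c]. *)
Definition firings (t k : nat) : nat := floor_nat (INR t * firing_rate k).
Definition rounds n : nat := floor_nat (Vs n).
Definition approach n : cplx := fire d m nu nu' (X n) (firings (rounds n)).

Lemma rounds_bounds n : Vs n - 1 < INR (rounds n) <= Vs n.
Proof. apply floor_nat_bounds. left; auto. Qed.

Lemma firings_between t r k : (k < m)%nat -> (firings t k <= r k <= firings (S t) k)%nat ->
  Rabs (INR (r k) - INR t * firing_rate k) <= firing_rate k + 1.
Proof.
  intros Hk [H1 H2]. apply le_INR in H1, H2. pose proof (firing_rate_nonneg k Hk).
  pose proof (pos_INR t). unfold firings in *. rewrite S_INR in H2.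
  pose proof (floor_nat_bounds (INR t * firing_rate k) ltac:(nra)).
  pose proof (floor_nat_bounds ((INR t + 1) * firing_rate k) ltac:(nra)).
  apply Rabs_le. nra.
Qed.

Lemma margin_eventually : eventually (fun n => forall i, (i < d)%nat ->
  firing_margin m nu nu' firing_rate i <= INR (X n i) /\
  firing_margin m nu nu' firing_rate i <= INR (X n i) + Vs n * (c i - xt i)).
Proof.
  apply eventually_forall_lt. intros i Hi. pose proof (c_pos i Hi). pose proof (xt_pos i Hi).
  apply eventually_and.
  - apply (eventually_mono (fun n => firing_margin m nu nu' firing_rate i
                                      <= INR (X n i) / Vs n * Vs n)).
    + intros n Hn. replace (INR (X n i) / Vs n * Vs n) with (INR (X n i)) in Hn; auto.
      field. pose proof (Vs_pos n); lra.
    + apply (cv_infty_mult Vs _ (xt i)); auto.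
  - apply (eventually_mono (fun n => firing_margin m nu nu' firing_rate i
                                      <= (INR (X n i) / Vs n + (c i - xt i)) * Vs n)).
    + intros n Hn. replace ((INR (X n i) / Vs n + (c i - xt i)) * Vs n)
        with (INR (X n i) + Vs n * (c i - xt i)) in Hn; auto.
      field. pose proof (Vs_pos n); lra.
    + apply (cv_infty_mult Vs _ (xt i + (c i - xt i))); [auto| |lra].
      apply (CV_plus (fun n => INR (X n i) / Vs n) (fun _ => c i - xt i));
        [apply X_cv; auto|apply Un_cv_const].
Qed.

Lemma approach_in_component (G : cplx -> Prop) (n : nat) :
  closed_irred_component d m nu nu' (kappaV d kappa nu (Vs n)) G -> G (X n) ->
  (forall i, (i < d)%nat ->
     firing_margin m nu nu' firing_rate i <= INR (X n i) /\
     firing_margin m nu nu' firing_rate i <= INR (X n i) + Vs n * (c i - xt i)) ->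
  G (approach n).
Proof.
  intros [_ [_ [HG _]]] HX Hmargin.
  apply (closed_fire_rounds d m nu nu' (X n) (kappaV d kappa nu (Vs n)) G) with (T := rounds n);
    auto.
  - apply kappaV_pos; auto.
  - intros t k Hk. apply floor_nat_mono; pose proof (firing_rate_nonneg k Hk);
      pose proof (pos_INR t); [nra|rewrite S_INR; nra].
  - intros k Hk. unfold firings. rewrite Rmult_0_l. apply floor_nat_0.
  - intros t Ht r Hr.
    apply (all_enabled_near_ray d m nu nu' firing_rate (fun i => c i - xt i) (X n) (Vs n))
      with (t := INR t);
      auto using firing_rate_direction.
    + split; [apply pos_INR|]. apply Rle_trans with (INR (rounds n)); [apply le_INR; lia|].
      apply rounds_bounds.
    + intros k Hk. apply firings_between; auto.
Qed.

Lemma firings_cv k : (k < m)%nat ->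
  Un_cv (fun n => INR (firings (rounds n) k) / Vs n) (firing_rate k).
Proof.
  intros Hk. pose proof (firing_rate_nonneg k Hk).
  apply (Un_cv_squeeze (fun n => firing_rate k - (firing_rate k + 1) * / Vs n) _
                       (fun _ => firing_rate k)); [| |apply Un_cv_const].
  - exists O. intros n _. pose proof (rounds_bounds n). pose proof (Vs_pos n). unfold firings.
    pose proof (floor_nat_bounds (INR (rounds n) * firing_rate k)
                  ltac:(pose proof (pos_INR (rounds n)); nra)).
    split.
    + replace (firing_rate k - (firing_rate k + 1) * / Vs n)
        with (((Vs n - 1) * firing_rate k - 1) / Vs n) by (field; lra).
      apply Rmult_le_compat_r; [left; apply Rinv_0_lt_compat; auto|nra].
    + apply (Rmult_le_reg_r (Vs n)); auto. unfold Rdiv.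
      rewrite Rmult_assoc, Rinv_l by lra. nra.
  - assert (Hlim : Un_cv (fun n => firing_rate k - (firing_rate k + 1) * / Vs n)
                          (firing_rate k - (firing_rate k + 1) * 0)).
    { apply CV_minus; [apply Un_cv_const|].
      apply CV_mult; [apply Un_cv_const|apply cv_infty_cv_0; auto]. }
    rewrite Rmult_0_r, Rminus_0_r in Hlim. exact Hlim.
Qed.

Lemma approach_cv i : (i < d)%nat -> Un_cv (fun n => INR (approach n i) / Vs n) (c i).
Proof.
  intros Hi.
  apply Un_cv_eventually_eq with (v := fun n => INR (X n i) / Vs n
      + sumR m (fun k => INR (firings (rounds n) k) / Vs n * (INR (nu' k i) - INR (nu k i)))).
  - generalize margin_eventually. apply eventually_mono. intros n Hmargin.
    unfold approach, fire. destruct (Nat.ltb_spec i d); [|lia].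
    assert (Hnonneg : (0 <= fireZ m nu nu' (X n) (firings (rounds n)) i)%Z).
    { apply le_IZR. apply Rle_trans with (sumR m (fun k => INR (nu k i)));
        [apply sumR_nonneg; intros; apply pos_INR|].
      apply (fireZ_ge_reactants d m nu nu' firing_rate (fun i => c i - xt i) (X n) (Vs n))
        with (t := INR (rounds n)); auto using firing_rate_direction.
      - split; [apply pos_INR|apply rounds_bounds].
      - intros k Hk. pose proof (firing_rate_nonneg k Hk). unfold firings.
        pose proof (floor_nat_bounds (INR (rounds n) * firing_rate k)
                      ltac:(pose proof (pos_INR (rounds n)); nra)).
        apply Rabs_le. lra. }
    rewrite INR_IZR_INZ, Z2Nat.id, fireZ_real by auto.
    unfold Rdiv. rewrite Rmult_plus_distr_r. f_equal.
    rewrite Rmult_comm, <- sumR_scal. apply sumR_ext. intros; ring.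
  - replace (c i) with (xt i + sumR m (fun k => firing_rate k * (INR (nu' k i) - INR (nu k i))))
      by (rewrite firing_rate_direction by auto; ring).
    apply CV_plus; [apply X_cv; auto|].
    apply (CV_sumR m (fun k n =>
      INR (firings (rounds n) k) / Vs n * (INR (nu' k i) - INR (nu k i)))).
    intros k Hk. apply CV_mult; [apply firings_cv; auto|apply Un_cv_const].
Qed.
End Approach.

(** * The normalizing constant *)

Lemma normalizer_ge d Vol c G Z y :
  normalizer d Vol c G Z -> G y -> poisson d Vol c y <= Z.
Proof.
  intros [Hub _] Hy. apply Hub. exists (y :: nil).
  split; [repeat constructor; auto|split; [intros x [<-|[]]; auto|simpl; ring]].
Qed.

Lemma normalizer_le1 d Vol c G Z : 0 < Vol -> pos_vec d c ->
  (forall x, G x -> is_state d x) -> normalizer d Vol c G Z -> Z <= 1.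
Proof.
  intros HV Hc HG [_ Hlub]. apply Hlub. intros r [l [Hnd [Hin ->]]].
  apply poisson_mass_le1; auto.
Qed.

(* A single state [Y n] of the component with [Y n / V n -> c] forces
   [pi(Y n) <= Z n <= 1], and [- ln pi(Y n) / V n -> lyap c c = 0]. *)
Lemma scaled_log_normalizer_cv d (V : nat -> R) (c : vec) (G : nat -> cplx -> Prop)
  (Z : nat -> R) (Y : nat -> cplx) :
  (forall n, 0 < V n) -> cv_infty V -> pos_vec d c ->
  (forall n x, G n x -> is_state d x) ->
  (forall n, normalizer d (V n) c (G n) (Z n)) ->
  eventually (fun n => G n (Y n)) ->
  (forall i, (i < d)%nat -> Un_cv (fun n => INR (Y n i) / V n) (c i)) ->
  Un_cv (fun n => / V n * ln (Z n)) 0.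
Proof.
  intros V_pos V_infty Hc Hstate HZ HY Y_cv.
  pose proof (scaled_log_poisson_cv d V c c Y V_pos V_infty Hc Hc Y_cv) as Hlim.
  rewrite lyap_self in Hlim.
  apply (Un_cv_squeeze (opp_seq (fun n => - / V n * ln (poisson d (V n) c (Y n)))) _ (fun _ => 0));
    [|rewrite <- Ropp_0; apply CV_opp; auto|apply Un_cv_const].
  revert HY. apply eventually_mono. intros n HGn. unfold opp_seq.
  pose proof (poisson_pos d (V n) c (Y n) (V_pos n) Hc).
  pose proof (normalizer_ge _ _ _ _ _ _ (HZ n) HGn).
  pose proof (normalizer_le1 d (V n) c (G n) (Z n) (V_pos n) Hc (Hstate n) (HZ n)).
  pose proof (Rinv_0_lt_compat _ (V_pos n)).
  split.
  - rewrite Ropp_mult_distr_l, Ropp_involutive.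
    apply Rmult_le_compat_l; [lra|apply ln_le; auto].
  - assert (ln (Z n) <= 0) by (rewrite <- ln_1; apply ln_le; lra). nra.
Qed.

Theorem theorem3p1 (d m : nat) (nu nu' : nat -> cplx) (kappa : nat -> R)
  (Vs : nat -> R) (X : nat -> cplx) (xt c : vec) :
  (forall k, (k < m)%nat -> 0 < kappa k) ->
  (exists c0, complex_balanced d m nu nu' kappa c0) ->
  0 < Vs 0%nat ->
  (forall n, Vs n < Vs (S n)) ->
  (forall M, exists N, forall n, (N <= n)%nat -> M < Vs n) ->
  (forall n, is_state d (X n)) ->
  pos_vec d xt ->
  (forall i, (i < d)%nat -> Un_cv (fun n => INR (X n i) / Vs n) (xt i)) ->
  complex_balanced d m nu nu' kappa c ->
  in_stoich d m nu nu' (fun i => c i - xt i) ->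
  Un_cv (fun n => - (/ Vs n) * ln (poisson d (Vs n) c (X n))) (lyap d c xt) /\
  (forall (G : nat -> cplx -> Prop) (Z : nat -> R),
     (forall n, closed_irred_component d m nu nu' (kappaV d kappa nu (Vs n)) (G n)) ->
     (forall n, G n (X n)) ->
     (forall n, normalizer d (Vs n) c (G n) (Z n)) ->
     (forall n, 0 < Z n) /\
     Un_cv (fun n => / Vs n * ln (Z n)) 0 /\
     Un_cv (fun n => - (/ Vs n) * ln (poisson d (Vs n) c (X n) / Z n)) (lyap d c xt)) /\
  lyap d c c = 0 /\
  (forall x : vec, pos_vec d x -> in_stoich d m nu nu' (fun i => x i - c i) ->
     (exists i, (i < d)%nat /\ x i <> c i) -> 0 < lyap d c x) /\
  (forall x : vec, pos_vec d x -> in_stoich d m nu nu' (fun i => x i - c i) ->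
     exists g : vec,
       (forall i, (i < d)%nat ->
          derivable_pt_lim (fun t => lyap d c (upd x i t)) (x i) (g i)) /\
       sumR d (fun i => g i * drift d m nu nu' kappa x i) <= 0 /\
       (sumR d (fun i => g i * drift d m nu nu' kappa x i) = 0 <->
        forall i, (i < d)%nat -> x i = c i)).
Proof.
  (* The existence of some complex balanced equilibrium is implied by [Hcb]. *)
  intros Hk _ V0 V_incr V_infty X_state Hxt X_cv Hcb [a Ha].
  assert (V_pos : forall n, 0 < Vs n) by (induction n; auto; pose proof (V_incr n); lra).
  assert (Hc : pos_vec d c) by apply Hcb.
  assert (HA := scaled_log_poisson_cv d Vs c xt X V_pos V_infty Hc Hxt X_cv).
  split; [exact HA|split; [|apply lyapunov_at_balanced; auto]].
  intros G Z HG HGX HZ.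
  assert (Z_pos : forall n, 0 < Z n).
  { intros n. pose proof (poisson_pos d (Vs n) c (X n) (V_pos n) Hc).
    pose proof (normalizer_ge _ _ _ _ _ _ (HZ n) (HGX n)). lra. }
  assert (HlnZ : Un_cv (fun n => / Vs n * ln (Z n)) 0).
  { apply (scaled_log_normalizer_cv d Vs c G Z (approach d m nu nu' kappa Vs X c a)); auto.
    - intros n x Hx. apply (HG n); auto.
    - generalize (margin_eventually d m nu nu' kappa Vs X xt c a V_pos V_infty Hxt X_cv Hcb).
      apply eventually_mono. intros n Hmargin.
      apply (approach_in_component d m nu nu' kappa Vs X xt c a); auto.
    - intros i Hi. apply (approach_cv d m nu nu' kappa Vs X xt c a); auto. }
  split; [exact Z_pos|split; [exact HlnZ|]].
  apply Un_cv_eventually_eq with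
    (v := fun n => - / Vs n * ln (poisson d (Vs n) c (X n)) + / Vs n * ln (Z n)).
  - exists O. intros n _. rewrite ln_div by (auto using poisson_pos). ring.
  - rewrite <- (Rplus_0_r (lyap d c xt)). apply CV_plus; auto.
Qed.
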